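(* Let $q=2^m\geq 4$ and let $l$ be an integer with $q-4\leq l\leq q-1$. Then there exists a linear $l$-intersection pair of two MDS codes over $\mathbb{F}_q$ both with parameters $[q+2,q-1,4]_q$.
   Context: An $[n,k,d]_q$ linear code is a $k$-dimensional subspace of $\mathbb{F}_q^n$ with minimum Hamming distance $d$; it is MDS if $d=n-k+1$. Two linear codes $C_1,C_2\subseteq\mathbb{F}_q^n$ form a linear $l$-intersection pair if $\dim(C_1\cap C_2)=l$. *)

From HB Require Import structures.
From mathcomp Require Import all_boot all_order all_algebra all_field.
Set Implicit Arguments. Unset Strict Implicit. Unset Printing Implicit Defensive.
Import GRing.Theory.
Local Open Scope ring_scope.

Definition hwt (F : fieldType) (n : nat) (v : 'rV[F]_n) : nat :=
  #|[set i : 'I_n | v 0 i != 0]|.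

Definition hdist (F : fieldType) (n : nat) (u v : 'rV[F]_n) : nat :=
  #|[set i : 'I_n | u 0 i != v 0 i]|.

Definition min_dist (F : fieldType) (n : nat) (C : {vspace 'rV[F]_n}) (d : nat) : Prop :=
  (exists u v, [/\ u \in C, v \in C, u != v & hdist u v = d]) /\
  (forall u v, u \in C -> v \in C -> u != v -> (d <= hdist u v)%N).

Definition is_code {F : fieldType} (n k d : nat) (C : {vspace 'rV[F]_n}) : Prop :=
  \dim C = k /\ min_dist C d.

Definition is_MDS (F : fieldType) (n : nat) (C : {vspace 'rV[F]_n}) : Prop :=
  exists d, min_dist C d /\ d = (n - \dim C + 1)%N.

Definition l_intersection_pair {F : fieldType} {n : nat} (l : nat) (C1 C2 : {vspace 'rV[F]_n}) : Prop :=
  \dim (C1 :&: C2)%VS = l.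

Arguments is_code {F} n k d C.
Arguments l_intersection_pair {F n} l C1 C2.
Arguments is_MDS {F n} C.

From HB Require Import structures.
From mathcomp Require Import all_boot all_order all_algebra all_field.
From mathcomp Require Import ring zify.
Set Implicit Arguments. Unset Strict Implicit. Unset Printing Implicit Defensive.
Import GRing.Theory.

(* The codes are parity-check codes of the regular hyperoval of PG(2, q),
   q = 2^m: the points (1, x, x^2) of a conic, its nucleus (0, 1, 0), and
   (0, 0, 1).  In characteristic 2 no line meets these q + 2 points three
   times, and the parity-check code of any point set with no r points on a
   hyperplane (an arc) has dimension n - r and minimum distance r + 1, so is
   MDS; rescaling the points keeps them an arc.  Rescale t <= 3 of the points
   by w, w <> 0, 1.  If c lies in both codes, then (w - 1) times the
   restriction of c to these t coordinates is a codeword of weight at most t,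
   hence zero.  So the intersection is cut out by 3 + t independent checks and
   has dimension q - 1 - t; take t = q - 1 - l. *)

Lemma exists_card_superset (T : finType) (S : {set T}) k :
  #|S| <= k <= #|T| -> exists2 S' : {set T}, S \subset S' & #|S'| = k.
Proof.
move=> /andP[leSk lekT].
have /card_geqP[s [uniq_s size_s sub_s]] : k - #|S| <= #|~: S|.
  by have := cardsC S; lia.
exists (S :|: [set x in s]); first exact: subsetUl.
have disjS : S :&: [set x in s] = set0.
  apply/setP => x; rewrite !inE; apply/negbTE; apply/andP => -[xS /sub_s].
  by rewrite inE xS.
have := cardsUI S [set x in s]; rewrite disjS cards0 addn0 => ->.
by rewrite cardsE (card_uniqP uniq_s) size_s; lia.
Qed.

Lemma widen_ord_inj m k (le_mk : m <= k) : injective (widen_ord le_mk).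
Proof. by move=> i j [] /val_inj. Qed.

Local Open Scope ring_scope.

Lemma mxrank_col_eqP (F : fieldType) m k (A : 'M[F]_(m, k)) :
  reflect (forall v : 'cV_k, A *m v = 0 -> v = 0) (\rank A == k).
Proof.
have -> : (\rank A == k) = row_free A^T by rewrite /row_free mxrank_tr.
apply: (iffP idP) => [freeAt v Av0 | kerA0].
  apply: trmx_inj; apply/eqP; rewrite trmx0 -(mulmx_free_eq0 _ freeAt).
  by rewrite -trmx_mul Av0 trmx0.
rewrite -kermx_eq0; apply/rowV0P => u /sub_kermxP uAt0.
apply: trmx_inj; rewrite trmx0; apply: kerA0.
by rewrite -[A]trmxK -trmx_mul uAt0 trmx0.
Qed.

Section ParityCode.
Variables (F : fieldType) (n : nat).

Definition parity_code k (M : 'M[F]_(n, k)) : {vspace 'rV[F]_n} :=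
  lker (linfun (mulmxr M)).

Lemma mem_parity_code k (M : 'M_(n, k)) c : (c \in parity_code M) = (c *m M == 0).
Proof. by rewrite memv_ker lfunE. Qed.

Lemma parity_code_cap k1 k2 (M : 'M_(n, k1)) (N : 'M_(n, k2)) :
  (parity_code M :&: parity_code N)%VS = parity_code (row_mx M N).
Proof.
by apply/vspaceP => c; rewrite memv_cap !mem_parity_code mul_mx_row row_mx_eq0.
Qed.

Lemma dim_parity_code k (M : 'M_(n, k)) : \rank M = k -> \dim (parity_code M) = (n - k)%N.
Proof.
move=> rankM; pose f : 'Hom(_, 'rV_k) := linfun (mulmxr M).
have /row_freeP[B MtB] : row_free M^T by rewrite /row_free mxrank_tr rankM.
have surj_f : limg f = fullv.
  apply/eqP; rewrite eqEsubv subvf; apply/subvP => y _.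
  have -> : y = f (y *m B^T) by rewrite lfunE /= -mulmxA -[M]trmxK -trmx_mul MtB trmx1 mulmx1.
  exact: memv_img (memvf _).
have := limg_ker_dim f fullv; rewrite capfv -[lker f]/(parity_code M) surj_f.
by rewrite !dimvf !dim_matrix !mul1r => E; rewrite -[in RHS]E addnK.
Qed.

Lemma hdist_hwt (u v : 'rV[F]_n) : hdist u v = hwt (u - v).
Proof. by apply: eq_card => i; rewrite !inE !mxE subr_eq0. Qed.

Lemma min_dist_wt (C : {vspace 'rV[F]_n}) d :
  (forall c, c \in C -> c != 0 -> (d <= hwt c)%N) ->
  (exists c, [/\ c \in C, c != 0 & hwt c = d]) -> min_dist C d.
Proof.
move=> wtC [c [cC c_neq0 wtc]]; split.
  by exists c, 0; rewrite hdist_hwt subr0 mem0v.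
by move=> u v uC vC uv; rewrite hdist_hwt wtC ?memvB // subr_eq0.
Qed.

End ParityCode.

(* The rows of [P] are read as points and [v] as a hyperplane. *)
Definition zero_set (F : fieldType) m r (P : 'M[F]_(m, r)) (v : 'cV_r) :=
  [set i | (P *m v) i 0 == 0].

Definition is_arc (F : fieldType) m r (P : 'M[F]_(m, r)) :=
  forall v : 'cV_r, v != 0 -> (#|zero_set P v| < r)%N.

Lemma card_zero_set_col_mx (F : fieldType) m1 m2 r (A : 'M[F]_(m1, r)) (B : 'M_(m2, r)) v :
  #|zero_set (col_mx A B) v| = (#|zero_set A v| + #|zero_set B v|)%N.
Proof.
rewrite /zero_set mul_col_mx -!sum1dep_card big_split_ord /=.
by congr (_ + _)%N; apply: eq_bigl => i; rewrite ?col_mxEu ?col_mxEd.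
Qed.

Lemma zero_set_scale (F : fieldType) m r (s : 'rV[F]_m) (P : 'M_(m, r)) v :
  (forall i, s 0 i != 0) -> zero_set (diag_mx s *m P) v = zero_set P v.
Proof.
move=> s_neq0; apply/setP => i; rewrite !inE -mulmxA mul_diag_mx mxE.
by rewrite mulf_eq0 (negbTE (s_neq0 i)).
Qed.

Lemma arc_scale (F : fieldType) m r (s : 'rV[F]_m) (P : 'M_(m, r)) :
  (forall i, s 0 i != 0) -> is_arc P -> is_arc (diag_mx s *m P).
Proof. by move=> s_neq0 arcP v /arcP; rewrite zero_set_scale. Qed.

Section ArcCode.
Variables (F : fieldType) (n r : nat) (P : 'M[F]_(n, r)).
Hypothesis arcP : is_arc P.

Lemma arc_vec_eq0 v : (r <= #|zero_set P v|)%N -> v = 0.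
Proof. by move=> le_rZ; apply/eqP; apply: contraT => /arcP; rewrite ltnNge le_rZ. Qed.

(* The checks [colsub g 1%:M] say that the coordinates [g j] vanish. *)
Lemma arc_rank_vanishing t (g : 'I_t -> 'I_n) :
  injective g -> (r + t <= n)%N -> \rank (row_mx P (colsub g 1%:M)) = (r + t)%N.
Proof.
move=> g_inj le_rtn; apply/eqP/mxrank_col_eqP => v.
rewrite -[v]vsubmxK mul_row_col; set v1 := usubmx v; set v2 := dsubmx v => PEv0.
have Ev2_out i : i \notin codom g -> (colsub g 1%:M *m v2) i 0 = 0.
  move=> i_g; rewrite mxE big1 // => j _; rewrite !mxE.
  by case: eqP => [eij|]; [move: i_g; rewrite eij codom_f | rewrite mul0r].
have v1_0 : v1 = 0.
  apply: arc_vec_eq0; apply: leq_trans (subset_leq_card (_ : ~: [set i in codom g] \subset _)).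
    by rewrite cardsCs setCK cardsE card_codom // !card_ord; lia.
  apply/subsetP => i; rewrite !inE => i_g.
  have := congr1 (fun M : 'cV_n => M i 0) PEv0; rewrite mxE Ev2_out // addr0 => ->.
  by rewrite mxE.
have v2_0 : v2 = 0.
  move: PEv0; rewrite v1_0 mulmx0 add0r => Ev2.
  have E_g : rowsub g (colsub g 1%:M) = 1%:M :> 'M[F]_t.
    by apply/matrixP => i j; rewrite !mxE (inj_eq g_inj).
  rewrite -[v2]mul1mx -E_g mul_rowsub_mx Ev2.
  by apply/matrixP => i j; rewrite !mxE.
by rewrite v1_0 v2_0 col_mx0.
Qed.

Hypothesis le_rn : (r <= n)%N.

Lemma arc_rank : \rank P = r.
Proof.
apply/eqP/mxrank_col_eqP => v Pv0; apply: arc_vec_eq0.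
suff -> : zero_set P v = setT by rewrite cardsT card_ord.
by apply/setP => i; rewrite !inE Pv0 mxE eqxx.
Qed.

Lemma arc_code_wt_gt c : c \in parity_code P -> c != 0 -> (r < hwt c)%N.
Proof.
rewrite mem_parity_code => /eqP cP0; apply: contraR; rewrite -leqNgt => wt_c.
set S := [set i | c 0 i != 0].
(* Extend the support of [c] to [r] positions: these rows of [P] are free. *)
have [S' sSS' cardS'] : exists2 S' : {set 'I_n}, S \subset S' & #|S'| = r.
  by apply: exists_card_superset; rewrite card_ord wt_c.
pose A := rowsub (enum_val : 'I_#|S'| -> 'I_n) P.
have freeA : row_free A.
  suff /eqP rankA : \rank A == r by rewrite /row_free rankA cardS'.
  apply/mxrank_col_eqP => v Av0.
  apply: arc_vec_eq0; rewrite -{1}cardS'.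
  apply/subset_leq_card/subsetP => i iS'; rewrite inE.
  have := congr1 (fun M : 'cV_#|S'| => M (enum_rank_in iS' i) 0) Av0.
  by rewrite mul_rowsub_mx !mxE enum_rankK_in // => ->.
pose u : 'rV_#|S'| := \row_k c 0 (enum_val k).
have cPA : c *m P = u *m A.
  rewrite !mulmx_sum_row (bigID (mem S')) /= [X in _ + X]big1 ?addr0 => [|i iS']; last first.
    suff -> : c 0 i = 0 by rewrite scale0r.
    by apply/eqP; apply: contraNT iS' => ci0; rewrite (subsetP sSS') ?inE.
  rewrite big_enum_val; apply: eq_bigr => k _.
  by rewrite row_rowsub mxE.
have u0 : u = 0 by apply/eqP; rewrite -(mulmx_free_eq0 _ freeA) -cPA cP0.
apply/eqP/rowP => i; rewrite mxE; apply/eqP; apply: contraT => ci0.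
have iS' : i \in S' by rewrite (subsetP sSS') ?inE.
have := congr1 (fun u : 'rV_#|S'| => u 0 (enum_rank_in iS' i)) u0.
by rewrite !mxE enum_rankK_in // => /eqP; rewrite (negbTE ci0).
Qed.

Lemma arc_code_cap_scale t (g : 'I_t -> 'I_n) (w : F) :
  injective g -> (t <= r)%N -> w != 1 ->
  (parity_code P :&: parity_code (diag_mx (\row_i (if i \in codom g then w else 1%R)) *m P))%VS
  = parity_code (row_mx P (colsub g 1%:M)).
Proof.
move=> g_inj le_tr w_neq1; set s := \row_i _.
apply/vspaceP => c; rewrite -parity_code_cap !memv_cap mem_parity_code.
apply: andb_id2l => /eqP cP0.
pose d := \row_i (if i \in codom g then c 0 i else 0).
have -> : (c \in parity_code (colsub g 1%:M)) = (d == 0).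
  rewrite mem_parity_code mulmx_colsub mulmx1; apply/eqP/eqP => [cg0 | d0].
    apply/rowP => i; rewrite !mxE; case: ifP => // /codomP[j ->].
    by have := congr1 (fun u : 'rV_t => u 0 j) cg0; rewrite !mxE.
  apply/rowP => j; have := congr1 (fun u : 'rV_n => u 0 (g j)) d0.
  by rewrite !mxE codom_f.
(* Given [c *m P = 0], [c] is in the rescaled code iff [d *m P = 0], and
   [d] has weight at most [t <= r]. *)
have csd : c *m diag_mx s = c + (w - 1) *: d.
  by apply/rowP => i; rewrite mul_mx_diag !mxE; case: ifP => _; ring.
rewrite mem_parity_code mulmxA csd mulmxDl cP0 add0r -scalemxAl scaler_eq0.
rewrite subr_eq0 (negbTE w_neq1) /=; apply/idP/idP => [dP0 | /eqP->]; last by rewrite mul0mx.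
apply/negPn/negP => d_neq0.
have dP : d \in parity_code P by rewrite mem_parity_code.
have := arc_code_wt_gt dP d_neq0.
have : (hwt d <= t)%N.
  rewrite -[t]card_ord -(card_codom g_inj) -cardsE; apply/subset_leq_card/subsetP => i.
  by rewrite !inE mxE; case: ifP; rewrite ?eqxx.
lia.
Qed.

Lemma dim_arc_code_cap_scale t (g : 'I_t -> 'I_n) (w : F) :
  injective g -> (t <= r)%N -> (r + t <= n)%N -> w != 1 ->
  \dim (parity_code P :&: parity_code (diag_mx (\row_i (if i \in codom g then w else 1%R)) *m P))
  = (n - (r + t))%N.
Proof.
move=> g_inj le_tr le_rtn w_neq1.
by rewrite arc_code_cap_scale // dim_parity_code // arc_rank_vanishing.
Qed.

End ArcCode.

Lemma arc_codeword_min_wt (F : fieldType) n r (P : 'M[F]_(n, r)) :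
  is_arc P -> (r < n)%N ->
  exists c, [/\ c \in parity_code P, c != 0 & hwt c = r.+1].
Proof.
move=> arcP lt_rn.
(* The codewords vanishing on the first [n - r - 1] coordinates form a line. *)
pose g := @widen_ord (n - r.+1) n (leq_subr _ _).
have g_inj : injective g by exact: widen_ord_inj.
set C := parity_code (row_mx P (colsub g 1%:M)).
have dimC : \dim C = 1%N.
  rewrite dim_parity_code; first lia.
  by rewrite (arc_rank_vanishing arcP g_inj); lia.
have C_neq0 : C != 0%VS by rewrite -dimv_eq0 dimC.
have [c] : exists2 c, c \in C & c != 0 by exists (vpick C); rewrite ?memv_pick ?vpick0.
rewrite /C -parity_code_cap memv_cap => /andP[cP].
rewrite mem_parity_code mulmx_colsub mulmx1 => /eqP cg0 c_neq0.
exists c; split=> //.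
apply/eqP; rewrite eqn_leq (arc_code_wt_gt arcP (ltnW lt_rn) cP c_neq0) andbT.
apply: leq_trans (_ : #|~: [set i in codom g]| <= _)%N.
  apply/subset_leq_card/subsetP => i; rewrite !inE; apply: contraNN => /codomP[j ->].
  by have := congr1 (fun u : 'rV_(n - r.+1) => u 0 j) cg0; rewrite !mxE => ->.
by rewrite cardsCs setCK cardsE card_codom ?card_ord //; lia.
Qed.

Lemma arc_code_MDS (F : fieldType) n r (P : 'M[F]_(n, r)) :
  is_arc P -> (r < n)%N ->
  is_code n (n - r) r.+1 (parity_code P) /\ is_MDS (parity_code P).
Proof.
move=> arcP lt_rn; have le_rn := ltnW lt_rn.
have dimC : \dim (parity_code P) = (n - r)%N by rewrite dim_parity_code ?arc_rank.
have mdC : min_dist (parity_code P) r.+1.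
  apply: min_dist_wt; first exact: arc_code_wt_gt.
  exact: arc_codeword_min_wt.
split; first by split.
by exists r.+1; split => //; rewrite dimC; lia.
Qed.

Section Hyperoval.
Variables (F : fieldType) (q : nat) (a : 'I_q -> F).
Hypotheses (a_inj : injective a) (pcharF : 2 \in [pchar F]).

(* The rows [(1, a i, a i ^+ 2)], then [(0, 1, 0)] and [(0, 0, 1)]. *)
Definition hyperoval : 'M[F]_(q + 2, 3) :=
  col_mx (\matrix_(i, k) a i ^+ k) (rowsub (lift ord0) 1%:M).

Lemma card_a_roots (p : {poly F}) k :
  p != 0 -> (size p <= k.+1)%N -> (#|[set i : 'I_q | root p (a i)]| <= k)%N.
Proof.
move=> p_neq0 size_p; rewrite -ltnS (leq_trans _ size_p) // cardE -(size_map a).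
apply: max_poly_roots => //.
  by apply/allP => x /mapP[i]; rewrite mem_enum inE => pai ->.
by rewrite map_inj_uniq ?enum_uniq.
Qed.

(* Squaring is injective in characteristic 2. *)
Lemma card_a_roots_pchar2 (p : {poly F}) : p`_1 = 0 -> p`_2 != 0 -> (size p <= 3)%N ->
  (#|[set i : 'I_q | root p (a i)]| <= 1)%N.
Proof.
move=> p1 p2 size_p; rewrite leqNgt; apply/card_gt1P => -[i [j []]].
have pE x : p.[x] = p`_0 + p`_2 * x ^+ 2.
  rewrite (horner_coef_wide _ size_p) !big_ord_recl big_ord0 /bump /=.
  by rewrite p1 expr0 mulr1 mul0r add0r addr0.
rewrite !inE /root !pE => /eqP pai /eqP paj; apply/negP; rewrite negbK.
rewrite -(inj_eq a_inj) -(inj_eq (fmorph_inj (pFrobenius_aut pcharF))).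
rewrite /= !pFrobenius_autE; apply/eqP; apply: (mulfI p2); apply: (addrI p`_0).
by rewrite pai paj.
Qed.

Lemma hyperoval_arc : is_arc hyperoval.
Proof.
move=> v v_neq0; rewrite card_zero_set_col_mx.
pose p : {poly F} := \poly_(k < 3) v (inord k) 0.
have coef_p (k : 'I_3) : p`_k = v k 0 by rewrite coef_poly ltn_ord inord_val.
have zero_affine : zero_set (\matrix_(i, k) a i ^+ k) v = [set i | root p (a i)].
  apply/setP => i; rewrite !inE /root horner_poly mxE.
  by congr (_ == 0); apply: eq_bigr => k _; rewrite mxE inord_val mulrC.
have card_zero_infinite :
    #|zero_set (rowsub (lift ord0) 1%:M) v| = ((p`_1 == 0)%R + (p`_2 == 0)%R)%N.
  rewrite /zero_set mul_rowsub_mx mul1mx -sum1dep_card big_mkcond !big_ord_recl big_ord0 !mxE.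
  by rewrite -!coef_p /=; case: eqP; case: eqP.
have p_neq0 : p != 0.
  by apply: contraNneq v_neq0 => p0; apply/eqP/colP => k; rewrite -coef_p p0 coef0 mxE.
have size_p : (size p <= 3)%N := size_poly _ _.
have size_p_le k : (forall j, (k <= j < 3)%N -> p`_j = 0) -> (size p <= k)%N.
  move=> p_hi; apply/leq_sizeP => j le_kj; case: (ltnP j 3) => [lt_j3 | le_3j].
    by apply: p_hi; rewrite le_kj.
  by move/leq_sizeP: size_p; apply.
rewrite card_zero_infinite zero_affine.
case: (eqVneq p`_2 0) => p2; case: (eqVneq p`_1 0) => p1 /=.
- have size_p1 : (size p <= 1)%N by apply: size_p_le => -[|[|[|j]]].
  exact: leq_add (card_a_roots p_neq0 size_p1) (leqnn 2).
- have size_p2 : (size p <= 2)%N by apply: size_p_le => -[|[|[|j]]].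
  exact: leq_add (card_a_roots p_neq0 size_p2) (leqnn 1).
- exact: leq_add (card_a_roots_pchar2 p1 p2 size_p) (leqnn 1).
- exact: leq_add (card_a_roots p_neq0 size_p) (leqnn 0).
Qed.

End Hyperoval.

Local Close Scope ring_scope.

Theorem theorem5 (F : finFieldType) (m : nat) (hF : #|F| = 2 ^ m) (hq : 4 <= 2 ^ m)
  (l : nat) (hl1 : 2 ^ m - 4 <= l) (hl2 : l <= 2 ^ m - 1) :
  exists C1 C2 : {vspace 'rV[F]_(2 ^ m + 2)},
    [/\ is_code (2 ^ m + 2) (2 ^ m - 1) 4 C1, is_MDS C1,
        is_code (2 ^ m + 2) (2 ^ m - 1) 4 C2, is_MDS C2
      & l_intersection_pair l C1 C2].
Proof.
set q := 2 ^ m in hF hq hl1 hl2 *.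
have pcharF : (2 \in [pchar F])%R by apply: (card_finPcharP hF).
pose a := enum_val \o cast_ord (esym hF).
have a_inj : injective a by apply: inj_comp; [exact: enum_val_inj | exact: cast_ord_inj].
have [w w_neq0 w_neq1] : exists2 w : F, w != 0%R & w != 1%R.
  have /card_gt0P[w] : 0 < #|~: [set 0%R; 1%R] : {set F}|.
    by rewrite cardsCs setCK hF cards2 eq_sym oner_neq0; lia.
  by rewrite !inE negb_or => /andP[]; exists w.
pose t := q - 1 - l; have le_t3 : t <= 3 by lia.
have le_tn : t <= q + 2 by lia.
pose g := widen_ord le_tn; have g_inj : injective g by exact: widen_ord_inj.
have oval := hyperoval_arc a_inj pcharF.
set s := (\row_i (if i \in codom g then w else 1) : 'rV[F]_(q + 2))%R.
have s_neq0 i : (s 0 i != 0)%R by rewrite mxE; case: ifP; rewrite ?oner_neq0.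
exists (parity_code (hyperoval a)), (parity_code (diag_mx s *m hyperoval a)).
have lt_3n : 3 < q + 2 by lia.
have [C1_code C1_MDS] := arc_code_MDS oval lt_3n.
have [C2_code C2_MDS] := arc_code_MDS (arc_scale s_neq0 oval) lt_3n.
have -> : q - 1 = q + 2 - 3 by lia.
split => //; rewrite /l_intersection_pair dim_arc_code_cap_scale //; lia.
Qed.
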